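(* In the setting below, for every face $F$ of $\mathcal{P}_\lambda$, $\phi(F)$ is a face of the ladder diagram $\Gamma_{\mathbf{k}}$, i.e. $\phi(F)\in\mathcal{F}(\Gamma_{\mathbf{k}})$.
   Context: Let $\mathbf{k}=(k_1,\dots,k_s)$ be positive integers with sum $n$, $n_0=0$, $n_i=\sum_{j\le i}k_j$, and $\lambda=(\lambda_1,\dots,\lambda_n)$ real with $\lambda_1=\cdots=\lambda_{n_1}>\lambda_{n_1+1}=\cdots=\lambda_{n_2}>\cdots>\lambda_{n_{s-1}+1}=\cdots=\lambda_n$. Let $I=\{(i,j)\in\mathbb{Z}^2:i,j\ge1,i+j\le n\}$; $\mathcal{P}_\lambda=\{x=(x_{i,j})_{(i,j)\in I}: x_{i,j+1}\ge x_{i,j}\ge x_{i+1,j}\ \forall (i,j)\in I\}$ with $x_{i,n+1-i}:=\lambda_i$. $Q^+$ is the directed graph on $\mathbb{Z}_{\ge0}^2$ with edges $((i,j),(i,j+1))$, $((i,j),(i+1,j))$. Terminal vertices $T_{\mathbf{k}}=\{(n_\ell,n-n_\ell):0\le\ell\le s\}$; $\Gamma_{\mathbf{k}}$ is the induced subgraph of $Q^+$ on $\{(a,b):a\le c,b\le d\text{ for some }(c,d)\in T_{\mathbf{k}}\}$. A positive path is a shortest directed path in $\Gamma_{\mathbf{k}}$ from $(0,0)$ to a terminal vertex. A face of $\Gamma_{\mathbf{k}}$ is a subgraph containing all terminal vertices that is a union of positive paths; $\mathcal{F}(\Gamma_{\mathbf{k}})$ is the set of faces. For a face $F$ of $\mathcal{P}_\lambda$,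 $\phi(F)$ is the subgraph of $Q^+$ whose edges are: all $((0,i),(0,i+1))$ and $((i,0),(i+1,0))$, $0\le i\le n-1$; $((i-1,j),(i,j))$ for $(i,j)\in I$ whenever some $x\in F$ has $x_{i,j}<x_{i,j+1}$; $((i,j-1),(i,j))$ for $(i,j)\in I$ whenever some $x\in F$ has $x_{i,j}>x_{i+1,j}$; its vertices are the endpoints of these edges. *)

From HB Require Import structures.
From mathcomp Require Import all_boot all_order all_algebra.
Set Implicit Arguments. Unset Strict Implicit. Unset Printing Implicit Defensive.
Import Order.TTheory GRing.Theory Num.Theory.

Notation vert := (nat * nat)%type.
Notation edge := (vert * vert)%type.

Definition nsum (k : seq nat) (l : nat) : nat := sumn (take l k).

Definition inI (n i j : nat) : bool := [&& 1 <= i, 1 <= j & i + j <= n].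

Section GZ.
Variable R : realFieldType.
Local Open Scope ring_scope.

(* points are functions nat -> nat -> R; only coordinates in I are meaningful,
   the others are required to vanish in P_lambda *)
Definition point := nat -> nat -> R.

(* x_{i,j}, with the convention x_{i,n+1-i} := lambda_i *)
Definition ext (n : nat) (lam : nat -> R) (x : point) (i j : nat) : R :=
  if (i + j == n.+1)%N then lam i else x i j.

Definition inGZ (n : nat) (lam : nat -> R) (x : point) : Prop :=
  (forall i j, ~~ inI n i j -> x i j = 0) /\
  (forall i j, inI n i j ->
     x i j <= ext n lam x i j.+1 /\ ext n lam x i.+1 j <= x i j).

Definition dot (n : nat) (c x : point) : R :=
  \sum_(i < n.+1) \sum_(j < n.+1) c i j * x i j.

Definition isPolytopeFace (n : nat) (P F : point -> Prop) : Prop :=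
  (exists x, F x) /\
  exists c : point, forall x,
    F x <-> (P x /\ forall y, P y -> dot n c y <= dot n c x).

Record subgraph := Subgraph { sg_V : vert -> Prop; sg_E : edge -> Prop }.

Definition phi (n : nat) (lam : nat -> R) (F : point -> Prop) : subgraph :=
  let E := fun e : edge =>
    (exists i, (i <= n.-1)%N /\ e = ((0, i), (0, i.+1))%N) \/
    (exists i, (i <= n.-1)%N /\ e = ((i, 0), (i.+1, 0))%N) \/
    (exists i j, inI n i j /\ e = ((i.-1, j), (i, j)) /\
       exists x, F x /\ x i j < ext n lam x i j.+1) \/
    (exists i j, inI n i j /\ e = ((i, j.-1), (i, j)) /\
       exists x, F x /\ x i j > ext n lam x i.+1 j) in
  Subgraph (fun v => exists e, E e /\ (v = e.1 \/ v = e.2)) E.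

End GZ.

Definition Qedge (u v : vert) : bool :=
  (v == (u.1, u.2.+1)) || (v == (u.1.+1, u.2)).

Definition isTerminal (k : seq nat) (v : vert) : bool :=
  has (fun l => v == (nsum k l, sumn k - nsum k l)) (iota 0 (size k).+1).

Definition inGamma (k : seq nat) (v : vert) : bool :=
  has (fun l => (v.1 <= nsum k l) && (v.2 <= sumn k - nsum k l))
      (iota 0 (size k).+1).

Definition gammaEdge (k : seq nat) (u v : vert) : bool :=
  [&& Qedge u v, inGamma k u & inGamma k v].

(* a directed path in Gamma_k starting at (0,0) is encoded by the list p of
   its vertices after (0,0); it has size p edges *)
Definition positivePath (k : seq nat) (p : seq vert) : Prop :=
  path (gammaEdge k) (0, 0) p /\ isTerminal k (last (0, 0) p) /\
  (forall q, path (gammaEdge k) (0, 0) q -> last (0, 0) q = last (0, 0) p ->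
     size p <= size q).

Definition pathVerts (p : seq vert) : seq vert := (0, 0) :: p.
Definition pathEdges (p : seq vert) : seq edge := zip ((0, 0) :: p) p.

Definition isGammaFace (k : seq nat) (G : subgraph) : Prop :=
  (forall v, isTerminal k v -> sg_V G v) /\
  exists Paths : seq vert -> Prop,
    (forall p, Paths p -> positivePath k p) /\
    (forall v, sg_V G v <-> exists p, Paths p /\ v \in pathVerts p) /\
    (forall e, sg_E G e <-> exists p, Paths p /\ e \in pathEdges p).

From HB Require Import structures.
From mathcomp Require Import all_boot all_order all_algebra.
From mathcomp Require Import zify.
Import Order.TTheory GRing.Theory Num.Theory.
Local Open Scope ring_scope.
Set Implicit Arguments. Unset Strict Implicit.

(* phi(F) is the union over x in F of phi({x}), so it suffices to show that every
   edge of phi({x}) lies on a positive path inside phi({x}) and that phi({x})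
   contains the terminal vertices.  For x in P_lambda, a point (i,j) of I is
   incident to phi({x}) iff x_{i+1,j} < x_{i,j+1}; by the interlacing
   inequalities such a vertex has an incoming edge from another incident vertex
   and, unless it is terminal, an outgoing edge to one.  Walking backwards to
   (0,0) and forwards to a terminal vertex gives the positive path.  On the
   diagonal i + j = n the condition reads lambda_{i+1} < lambda_i, which holds
   exactly at the terminal vertices (n_l, n - n_l). *)

Lemma Qedge_sum u v : Qedge u v -> (v.1 + v.2 = (u.1 + u.2).+1)%N.
Proof. by case/orP=> /eqP -> /=; lia. Qed.

Lemma Qedge_le u v : Qedge u v -> (u.1 <= v.1)%N /\ (u.2 <= v.2)%N.
Proof. by case/orP=> /eqP -> /=; lia. Qed.

Lemma Qpath_size u q : path Qedge u q ->
  ((last u q).1 + (last u q).2 = u.1 + u.2 + size q)%N.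
Proof.
elim: q u => [|w q IH] u /=; first by rewrite addn0.
by case/andP=> /Qedge_sum uw /IH ->; rewrite uw; lia.
Qed.

Lemma Qpath_le u q v : path Qedge u q -> v \in u :: q ->
  (v.1 <= (last u q).1)%N /\ (v.2 <= (last u q).2)%N.
Proof.
elim: q u v => [|w q IH] u v /=; first by rewrite mem_seq1 => _ /eqP ->.
case/andP=> /Qedge_le [le1 le2] pq; rewrite in_cons => /orP [/eqP ->|]; last exact: IH.
have [wl1 wl2] := IH w w pq (mem_head _ _).
by split; [exact: leq_trans wl1 | exact: leq_trans wl2].
Qed.

Lemma nsum_le k l : (nsum k l <= sumn k)%N.
Proof. by rewrite /nsum -{2}(cat_take_drop l k) sumn_cat leq_addr. Qed.

Lemma terminal_sum k v : isTerminal k v -> (v.1 + v.2 = sumn k)%N.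
Proof. by case/hasP=> l _ /eqP -> /=; rewrite subnKC ?nsum_le. Qed.

Lemma inGamma_le k u v : inGamma k v ->
  (u.1 <= v.1)%N -> (u.2 <= v.2)%N -> inGamma k u.
Proof.
case/hasP=> l lk /andP [v1 v2] u1 u2; apply/hasP; exists l => //.
by rewrite (leq_trans u1 v1) (leq_trans u2 v2).
Qed.

Lemma terminal_inGamma k v : isTerminal k v -> inGamma k v.
Proof. by case/hasP=> l lk /eqP ->; apply/hasP; exists l; rewrite ?leqnn. Qed.

Lemma Qpath_gamma k u q : path Qedge u q -> inGamma k (last u q) ->
  path (gammaEdge k) u q.
Proof.
move=> pq Gl; have inG v : v \in u :: q -> inGamma k v.
  by move=> vq; have [le1 le2] := Qpath_le pq vq; exact: inGamma_le Gl le1 le2.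
elim: q u pq inG {Gl} => [|w q IH] u //= /andP [uw pq] inG.
rewrite /gammaEdge uw !inG ?mem_head ?inE ?eqxx ?orbT //=.
by apply: IH => // v vq; apply: inG; rewrite inE vq orbT.
Qed.

Lemma gammaEdge_Qedge k : subrel (gammaEdge k) Qedge.
Proof. by move=> u v /and3P []. Qed.

Lemma Qpath_positive k p : path Qedge (0, 0)%N p ->
  isTerminal k (last (0, 0)%N p) -> positivePath k p.
Proof.
move=> pp tp; split; first exact/Qpath_gamma/terminal_inGamma.
split=> // q qp qlast.
have := Qpath_size pp; have := Qpath_size (sub_path (@gammaEdge_Qedge k) qp).
by rewrite qlast /=; lia.
Qed.

Lemma mem_zip_pair (S T : eqType) (s : seq S) (t : seq T) e :
  e \in zip s t -> e.1 \in s /\ e.2 \in t.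
Proof.
elim: s t => [|a s IH] [|b t] //=; rewrite in_cons => /orP [/eqP -> | /IH [es et]].
  by rewrite eqxx mem_head.
by rewrite es orbT in_cons et orbT.
Qed.

Lemma mem_zip_cons_cat (a : vert) q1 w q2 :
  (last a q1, w) \in zip (a :: q1 ++ w :: q2) (q1 ++ w :: q2).
Proof.
by elim: q1 a => [|b q1 IH] a /=; rewrite ?mem_head // in_cons IH orbT.
Qed.

Section Walks.
Variable E : edge -> Prop.

Fixpoint walk (u : vert) (q : seq vert) : Prop :=
  if q is v :: q' then E (u, v) /\ walk v q' else True.

Lemma walk_cat u q1 q2 : walk u (q1 ++ q2) <-> walk u q1 /\ walk (last u q1) q2.
Proof. by elim: q1 u => [|v q1 IH] u /=; [tauto | rewrite IH; tauto]. Qed.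

Lemma walk_edges u q e : walk u q -> e \in zip (u :: q) q -> E e.
Proof.
elim: q u => [|w q IH] u //= [Euw wq].
by rewrite in_cons => /orP [/eqP -> // | /IH]; apply.
Qed.

Lemma walk_Qpath : (forall u v, E (u, v) -> Qedge u v) ->
  forall u q, walk u q -> path Qedge u q.
Proof.
by move=> EQ u q; elim: q u => [|w q IH] u //= [/EQ -> /IH].
Qed.

Lemma walk_from_origin (V : vert -> Prop) :
  (forall v, V v -> v <> (0, 0)%N -> exists2 u, E (u, v) & V u) ->
  (forall u v, E (u, v) -> (v.1 + v.2 = (u.1 + u.2).+1)%N) ->
  forall v, V v -> exists2 q, walk (0, 0)%N q & last (0, 0)%N q = v.
Proof.
move=> back Esum v; move: {2}(v.1 + v.2)%N (leqnn (v.1 + v.2)) => m.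
elim: m v => [|m IH] v vm Vv.
  by exists [::] => //; case: v vm {Vv} => [[|a] [|b]].
have [->|v0] := eqVneq v (0, 0)%N; first by exists [::].
have [u Euv Vu] := back v Vv (elimN eqP v0).
have [|q qw qlast] := IH u _ Vu; first by have := Esum _ _ Euv; lia.
exists (rcons q v); last by rewrite last_rcons.
by rewrite -cats1; apply/walk_cat; rewrite qlast.
Qed.

Lemma walk_to_target (V T : vert -> Prop) N :
  (forall v, V v -> (v.1 + v.2 <= N)%N) ->
  (forall v, V v -> T v \/ exists2 w, E (v, w) & V w) ->
  (forall u v, E (u, v) -> (v.1 + v.2 = (u.1 + u.2).+1)%N) ->
  forall v, V v -> exists2 q, walk v q & T (last v q).
Proof.
move=> bound fwd Esum v; move: {2}(N - (v.1 + v.2))%N (leqnn (N - (v.1 + v.2))) => m.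
elim: m v => [|m IH] v vm Vv; (case: (fwd v Vv) => [Tv | [w Evw Vw]]; first by exists [::]);
  have := bound w Vw; have := Esum _ _ Evw.
  by lia.
move=> sw wN; have [|q wq Tq] := IH w _ Vw; first by lia.
by exists (w :: q).
Qed.

End Walks.

Lemma walk_sub (E1 E2 : edge -> Prop) u q :
  (forall e, E1 e -> E2 e) -> walk E1 u q -> walk E2 u q.
Proof. by move=> sE; elim: q u => [|w q IH] u //= [/sE ? /IH]. Qed.

Lemma gammaFaceP k (G : subgraph) :
  (forall v, sg_V G v <-> exists e, sg_E G e /\ (v = e.1 \/ v = e.2)) ->
  sg_V G (0, 0)%N ->
  (forall v, isTerminal k v -> sg_V G v) ->
  (forall e, sg_E G e ->
     exists p, [/\ positivePath k p, walk (sg_E G) (0, 0)%N p & e \in pathEdges p]) ->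
  isGammaFace k G.
Proof.
move=> GV G0 GT GE; split=> //.
exists (fun p => positivePath k p /\ walk (sg_E G) (0, 0)%N p).
split; first by move=> p [].
split=> [v | e]; last first.
  split=> [/GE [p [pp wp ep]] | [p [[_ wp] ep]]]; first by exists p.
  exact: walk_edges wp ep.
split=> [/GV [e [Ge ve]] | [p [[_ wp]]]].
  have [p [pp wp /mem_zip_pair [e1 e2]]] := GE e Ge.
  by exists p; split=> //; case: ve => ->; rewrite // inE e2 orbT.
rewrite inE => /orP [/eqP -> // | vp].
move: vp; rewrite -(unzip2_zip (s := (0, 0)%N :: p) (t := p)) ?leqnSn //.
case/mapP=> e ep ->; apply/GV; exists e; split; last by right.
exact: walk_edges wp ep.
Qed.

Lemma ext_inner (R : realFieldType) n (lam : nat -> R) (x : point R) i j :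
  (i + j != n.+1)%N -> ext n lam x i j = x i j.
Proof. by rewrite /ext => /negbTE ->. Qed.

Lemma ext_diag (R : realFieldType) n (lam : nat -> R) (x : point R) i j :
  (i + j = n.+1)%N -> ext n lam x i j = lam i.
Proof. by rewrite /ext => ->; rewrite eqxx. Qed.

Section GZPoint.
Variables (R : realFieldType) (n : nat) (lam : nat -> R) (x : point R).
Hypothesis hx : inGZ n lam x.

Local Notation X := (ext n lam x).

Definition gzEdge (e : edge) : Prop :=
  (exists i, (i <= n.-1)%N /\ e = ((0, i), (0, i.+1))%N) \/
  (exists i, (i <= n.-1)%N /\ e = ((i, 0), (i.+1, 0))%N) \/
  (exists i j, inI n i j /\ e = ((i.-1, j), (i, j)) /\ x i j < X i j.+1) \/
  (exists i j, inI n i j /\ e = ((i, j.-1), (i, j)) /\ x i j > X i.+1 j).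

Definition gzVertex (v : vert) : Prop :=
  (v.1 = 0 /\ v.2 <= n)%N \/ (v.2 = 0 /\ v.1 <= n)%N \/
  (inI n v.1 v.2 /\ X v.1.+1 v.2 < X v.1 v.2.+1).

Lemma gz_le_right i j : inI n i j -> x i j <= X i j.+1.
Proof. by case: hx => _ gz /gz []. Qed.

Lemma gz_ge_down i j : inI n i j -> X i.+1 j <= x i j.
Proof. by case: hx => _ gz /gz []. Qed.

Lemma down_edge_ends i j : inI n i j -> x i j < X i j.+1 ->
  gzVertex (i.-1, j) /\ gzVertex (i, j).
Proof.
move=> Iij ltx; split; last by right; right; split=> //; exact: le_lt_trans (gz_ge_down Iij) ltx.
move: (Iij); rewrite /inI => /and3P [i1 j1 ij].
case: i i1 ij Iij ltx => [|[|i]] // _ ij Iij ltx; first by left; split=> //=; lia.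
right; right; split; first by rewrite /inI /=; lia.
rewrite /= (ext_inner _ _ _ (i := i.+2)); last by apply/eqP; lia.
rewrite (ext_inner _ _ _ (i := i.+1)); last by apply/eqP; lia.
apply: lt_le_trans ltx (gz_ge_down _); rewrite /inI; lia.
Qed.

Lemma right_edge_ends i j : inI n i j -> X i.+1 j < x i j ->
  gzVertex (i, j.-1) /\ gzVertex (i, j).
Proof.
move=> Iij ltx; split; last by right; right; split=> //; exact: lt_le_trans ltx (gz_le_right Iij).
move: (Iij); rewrite /inI => /and3P [i1 j1 ij].
case: j j1 ij Iij ltx => [|[|j]] // _ ij Iij ltx; first by right; left; split=> //=; lia.
right; right; split; first by rewrite /inI /=; lia.
rewrite /= (ext_inner _ _ _ (j := j.+2)); last by apply/eqP; lia.
rewrite (ext_inner _ _ _ (i := i.+1)); last by apply/eqP; lia.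
apply: le_lt_trans (gz_le_right _) ltx; rewrite /inI; lia.
Qed.

Lemma gzEdge_Qedge u v : gzEdge (u, v) -> Qedge u v.
Proof.
case=> [[i [_ [-> ->]]] | [[i [_ [-> ->]]] | [[i [j [Iij [[-> ->] _]]]] | [i [j [Iij [[-> ->] _]]]]]]];
  rewrite /Qedge /= ?eqxx ?orbT //; move: Iij; rewrite /inI => /and3P [i1 j1 _].
  by rewrite prednK // eqxx orbT.
by rewrite prednK // eqxx.
Qed.

Lemma inner_out a b : inI n a b -> (a + b < n)%N ->
  X a.+1 b < X a b.+1 -> exists w, gzEdge ((a, b), w).
Proof.
rewrite /inI => /and3P [a1 b1 _] abn ltX.
have downE : X a.+1 b = x a.+1 b by apply: ext_inner; apply/eqP; lia.
have rightE : X a b.+1 = x a b.+1 by apply: ext_inner; apply/eqP; lia.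
have [ltx | gex] := ltP (X a.+1 b) (X a.+1 b.+1).
  exists (a.+1, b); right; right; left; exists a.+1, b; split; first by rewrite /inI; lia.
  by rewrite -downE.
exists (a, b.+1); right; right; right; exists a, b.+1; split; first by rewrite /inI; lia.
by split=> //; rewrite -rightE; exact: le_lt_trans gex ltX.
Qed.

Lemma gzVertex_sum_le v : gzVertex v -> (v.1 + v.2 <= n)%N.
Proof. by case=> [[-> //] | [[-> ?] | [/and3P [] //]]]; rewrite addn0. Qed.

(* Needed because [n.-1] is truncated: for [n = 0] the axis edges of phi would
   still include ((0,0),(0,1)) and ((0,0),(1,0)). *)
Hypothesis hn0 : (0 < n)%N.

Lemma gzEdge_ends u v : gzEdge (u, v) -> gzVertex u /\ gzVertex v.
Proof.
case=> [[i [i1 [-> ->]]] | [[i [i1 [-> ->]]] | [[i [j [Iij [[-> ->] ltx]]]] | [i [j [Iij [[-> ->] ltx]]]]]]].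
- by split; left; split=> //=; lia.
- by split; right; left; split=> //=; lia.
- exact: down_edge_ends.
- exact: right_edge_ends.
Qed.

Lemma gzVertex_in v : gzVertex v -> v <> (0, 0)%N ->
  exists2 u, gzEdge (u, v) & gzVertex u.
Proof.
move=> Vv v0; suff [u Euv] : exists u, gzEdge (u, v) by exists u => //; case: (gzEdge_ends Euv).
case: v Vv v0 => a b [[/= -> bn] | [[/= -> an] | [/= Iab ltX]]] v0.
- case: b bn v0 => [|b] // bn _; exists (0, b)%N; left; exists b; split=> //; lia.
- case: a an v0 => [|a] // an _; exists (a, 0)%N; right; left; exists a; split=> //; lia.
- have [ltx | gex] := ltP (x a b) (X a b.+1).
    by exists (a.-1, b); right; right; left; exists a, b.
  exists (a, b.-1); right; right; right; exists a, b; split=> //; split=> //.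
  exact: lt_le_trans ltX gex.
Qed.

Variable k : seq nat.
Hypothesis hn : sumn k = n.
Hypothesis hlam : forall i : nat, (1 <= i)%N -> (i < n)%N ->
  (i \in [seq nsum k l | l <- iota 0 (size k).+1] -> lam i.+1 < lam i) /\
  (i \notin [seq nsum k l | l <- iota 0 (size k).+1] -> lam i = lam i.+1).

Lemma terminal_nsum l : (l <= size k)%N -> isTerminal k (nsum k l, n - nsum k l)%N.
Proof. by move=> lk; apply/hasP; exists l; rewrite ?mem_iota ?hn //=; lia. Qed.

Lemma diag_terminal a b : inI n a b -> (a + b = n)%N ->
  X a.+1 b < X a b.+1 -> isTerminal k (a, b).
Proof.
rewrite /inI => /and3P [a1 b1 _] abn.
rewrite (ext_diag _ _ _ (i := a.+1)) ?(ext_diag _ _ _ (i := a)); try lia.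
have [brk flat] := hlam a1 (ltac:(lia)).
case: (boolP (a \in [seq nsum k l | l <- iota 0 (size k).+1])) => [/mapP [l lk aE] _ | /flat ->];
  last by rewrite ltxx.
subst a.
have -> : b = (n - nsum k l)%N by lia.
by apply: terminal_nsum; move: lk; rewrite mem_iota; lia.
Qed.

Lemma terminal_gzVertex v : isTerminal k v -> gzVertex v.
Proof.
case/hasP=> l; rewrite mem_iota => lk /eqP ->; rewrite hn.
have nl := nsum_le k l; rewrite hn in nl.
have [-> | l0] := eqVneq (nsum k l) 0%N; first by left; rewrite /= subn0.
have [-> | ln] := eqVneq (nsum k l) n; first by right; left; rewrite subnn.
right; right; split; first by rewrite /inI /=; lia.
rewrite /= (ext_diag _ _ _ (i := (nsum k l).+1)) ?(ext_diag _ _ _ (i := nsum k l)); try lia.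
apply: (hlam _ _).1; [lia | lia | by apply/mapP; exists l; rewrite ?mem_iota].
Qed.

Lemma gzVertex_out v : gzVertex v -> isTerminal k v \/ exists2 w, gzEdge (v, w) & gzVertex w.
Proof.
move=> Vv; suff [Tv | [w Evw]] : isTerminal k v \/ exists w, gzEdge (v, w).
- by left.
- by right; exists w => //; case: (gzEdge_ends Evw).
case: v Vv => a b [[/= -> bn] | [[/= -> an] | [/= Iab ltX]]].
- have [bn' | ->] : (b < n \/ b = n)%N by lia.
    by right; exists (0, b.+1)%N; left; exists b; split=> //; lia.
  by left; have := terminal_nsum (leq0n (size k)); rewrite /nsum take0 /= subn0.
- have [an' | ->] : (a < n \/ a = n)%N by lia.
    by right; exists (a.+1, 0)%N; right; left; exists a; split=> //; lia.
  by left; have := terminal_nsum (leqnn (size k)); rewrite /nsum take_size hn subnn.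
- have [abn | abn] : (a + b = n \/ a + b < n)%N by move: Iab => /and3P []; lia.
    by left; exact: diag_terminal.
  by right; exact: inner_out.
Qed.

Lemma gzEdge_on_positive_path e : gzEdge e ->
  exists p, [/\ positivePath k p, walk gzEdge (0, 0)%N p & e \in pathEdges p].
Proof.
case: e => u w Euw; have [Vu Vw] := gzEdge_ends Euw.
have Esum u' v' : gzEdge (u', v') -> (v'.1 + v'.2 = (u'.1 + u'.2).+1)%N.
  by move/gzEdge_Qedge/Qedge_sum.
have [q1 wq1 lq1] := walk_from_origin gzVertex_in Esum Vu.
have [q2 wq2 tq2] := walk_to_target gzVertex_sum_le gzVertex_out Esum Vw.
have wp : walk gzEdge (0, 0)%N (q1 ++ w :: q2) by apply/walk_cat; rewrite lq1.
exists (q1 ++ w :: q2); split=> //; last by rewrite /pathEdges -lq1 mem_zip_cons_cat.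
apply: Qpath_positive; first exact: walk_Qpath gzEdge_Qedge _ _ wp.
by rewrite last_cat lq1.
Qed.
End GZPoint.

Lemma phi_edgeP (R : realFieldType) n (lam : nat -> R) (F : point R -> Prop) x0 e :
  F x0 -> sg_E (phi n lam F) e <-> exists2 x, F x & gzEdge n lam x e.
Proof.
move=> Fx0; split.
  case=> [ax | [ax | [[i [j [Iij [ee [x [Fx ltx]]]]]] | [i [j [Iij [ee [x [Fx ltx]]]]]]]]].
  - by exists x0 => //; left.
  - by exists x0 => //; right; left.
  - by exists x => //; right; right; left; exists i, j.
  - by exists x => //; right; right; right; exists i, j.
case=> x Fx [ax | [ax | [[i [j [Iij [ee ltx]]]] | [i [j [Iij [ee ltx]]]]]]].
- by left.
- by right; left.
- by right; right; left; exists i, j; do 2!split=> //; exists x.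
- by right; right; right; exists i, j; do 2!split=> //; exists x.
Qed.

Theorem corollary2p4 (R : realFieldType) (k : seq nat) (n : nat) (lam : nat -> R)
  (F : point R -> Prop)
  (hk_pos : all (fun m => 0 < m)%N k) (hk_ne : (0 < size k)%N) (hn : sumn k = n)
  (hlam : forall i : nat, (1 <= i)%N -> (i < n)%N ->
     (i \in [seq nsum k l | l <- iota 0 (size k).+1] -> lam i.+1 < lam i) /\
     (i \notin [seq nsum k l | l <- iota 0 (size k).+1] -> lam i = lam i.+1))
  (hF : isPolytopeFace n (inGZ n lam) F) :
  isGammaFace k (phi n lam F).
Proof.
have hn0 : (0 < n)%N.
  by case: k hk_pos hk_ne hn {hlam} => [|m k'] //= /andP [m0 _] _ <-; rewrite ltn_addr.
have [[x0 Fx0] [c hc]] := hF.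
have gzF x : F x -> inGZ n lam x by case/hc.
have phiE e := phi_edgeP n lam e Fx0.
apply: gammaFaceP => //.
- exists ((0, 0), (0, 1))%N; split; last by left.
  by apply/phiE; exists x0 => //; left; exists 0%N.
- move=> v Tv; have Vv := terminal_gzVertex x0 hn0 hn hlam Tv.
  have v0 : v <> (0, 0)%N by move=> v0; move: (terminal_sum Tv); rewrite v0 hn /=; lia.
  have [u Euv _] := gzVertex_in (gzF x0 Fx0) hn0 Vv v0.
  by exists (u, v); split; [apply/phiE; exists x0 | right].
- move=> e /phiE [x Fx Exe].
  have [p [pp wp ep]] := gzEdge_on_positive_path (gzF x Fx) hn0 hn hlam Exe.
  exists p; split=> //; apply: walk_sub wp => e' Exe'.
  by apply/phiE; exists x.
Qed.
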